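(* For all $\alpha\ge1$ and $a,b\ge0$, $$|\gamma(\alpha,a)-\gamma(\alpha,b)|\ge|a-b|(ab)^{\frac{\alpha-1}{2}}e^{-\frac{a+b}{2}},$$ where $\gamma(\alpha,x)=\int_0^x t^{\alpha-1}e^{-t}\,dt$ is the lower incomplete gamma function. *)

From Stdlib Require Import Reals.
Open Scope R_scope.

(* Real power x^s for x >= 0, with the convention 0^0 = 1 and 0^s = 0 for s <> 0
   (Stdlib's Rpower is only meaningful for x > 0). *)
Definition rpow (x s : R) : R :=
  if Req_EM_T x 0 then (if Req_EM_T s 0 then 1 else 0) else Rpower x s.

Definition gamma_integrand (alpha : R) (t : R) : R :=
  rpow t (alpha - 1) * exp (- t).

From Stdlib Require Import Reals Lra.
From Coquelicot Require Import Coquelicot.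
Open Scope R_scope.

(* Write f for the integrand and G(a,b) = (ab)^((alpha-1)/2) e^(-(a+b)/2).
   For 0 <= a <= b the difference gamma(alpha,b) - gamma(alpha,a) is the
   integral of f over [a,b] (Chasles).  The reflection t |-> a+b-t maps
   [a,b] onto itself and preserves the integral, so
     2 int_a^b f = int_a^b (f(t) + f(a+b-t)) dt.
   Pointwise, AM-GM for the exponential gives
     f(t) + f(a+b-t) >= 2 exp(((alpha-1) ln(t(a+b-t)) - (a+b)) / 2),
   and t(a+b-t) >= ab on [a,b] together with alpha >= 1 bounds this below
   by 2 G(a,b).  Integrating yields int_a^b f >= (b-a) G(a,b); the case
   a > b follows by symmetry of the statement. *)

Lemma exp_midpoint_le (x y : R) : 2 * exp ((x + y) / 2) <= exp x + exp y.
Proof.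
  assert (Ex : exp x = exp (x / 2) * exp (x / 2))
    by (rewrite <- exp_plus; f_equal; lra).
  assert (Ey : exp y = exp (y / 2) * exp (y / 2))
    by (rewrite <- exp_plus; f_equal; lra).
  assert (Exy : exp ((x + y) / 2) = exp (x / 2) * exp (y / 2))
    by (rewrite <- exp_plus; f_equal; lra).
  rewrite Ex, Ey, Exy.
  pose proof (Rle_0_sqr (exp (x / 2) - exp (y / 2))). unfold Rsqr in *. lra.
Qed.

Lemma exp_le_mono (x y : R) : x <= y -> exp x <= exp y.
Proof.
  intros [Hlt | ->]; [left; now apply exp_increasing | apply Rle_refl].
Qed.

Lemma rpow_nonneg (x s : R) : 0 <= rpow x s.
Proof.
  unfold rpow. destruct Req_EM_T; [destruct Req_EM_T; lra|].
  left; apply exp_pos.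
Qed.

Lemma rpow_pos_base (x s : R) : 0 < x -> rpow x s = exp (s * ln x).
Proof. intros Hx. unfold rpow. destruct Req_EM_T; [lra | reflexivity]. Qed.

Lemma rpow_zero_exponent (x : R) : rpow x 0 = 1.
Proof.
  unfold rpow. destruct Req_EM_T; [destruct Req_EM_T; lra|].
  unfold Rpower. rewrite Rmult_0_l. apply exp_0.
Qed.

Definition gamma_gap_bound (alpha a b : R) : R :=
  rpow (a * b) ((alpha - 1) / 2) * exp (- ((a + b) / 2)).

Lemma gamma_gap_bound_nonneg (alpha a b : R) : 0 <= gamma_gap_bound alpha a b.
Proof.
  apply Rmult_le_pos; [apply rpow_nonneg | left; apply exp_pos].
Qed.

Lemma gamma_gap_bound_sym (alpha a b : R) :
  gamma_gap_bound alpha a b = gamma_gap_bound alpha b a.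
Proof. unfold gamma_gap_bound. now rewrite (Rmult_comm a b), (Rplus_comm a b). Qed.

(* For exponent zero the integrand is exactly e^(-t), even at t = 0. *)
Lemma gamma_integrand_one (t : R) : gamma_integrand 1 t = exp (- t).
Proof.
  unfold gamma_integrand. replace (1 - 1) with 0 by ring.
  rewrite rpow_zero_exponent. ring.
Qed.

(* On positive arguments the integrand is exp((alpha-1) ln t - t), which
   lets the pointwise estimate be done in the exponent. *)
Lemma gamma_integrand_pos (alpha t : R) :
  0 < t -> gamma_integrand alpha t = exp ((alpha - 1) * ln t + - t).
Proof. intros Ht. unfold gamma_integrand. now rewrite rpow_pos_base, exp_plus. Qed.

(* Points of [a,b] are balanced better than the endpoints:
   t (a+b-t) - ab = (t-a)(b-t) >= 0. *)
Lemma reflected_product_ge (a b t : R) :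
  a <= t <= b -> a * b <= t * (a + b - t).
Proof. intros Ht. nra. Qed.

Lemma gamma_integrand_reflected_sum (alpha a b t : R) :
  1 <= alpha -> 0 <= a -> a <= t <= b ->
  2 * gamma_gap_bound alpha a b
    <= gamma_integrand alpha t + gamma_integrand alpha (a + b - t).
Proof.
  intros Halpha Ha Ht. unfold gamma_gap_bound.
  destruct (Req_dec alpha 1) as [->|Halpha1].
  { rewrite !gamma_integrand_one.
    replace (1 - 1) with 0 by ring. replace (0 / 2) with 0 by field.
    rewrite rpow_zero_exponent, Rmult_1_l.
    replace (- ((a + b) / 2)) with ((- t + - (a + b - t)) / 2) by field.
    apply exp_midpoint_le. }
  destruct (Req_dec a 0) as [->|Ha0].
  { (* alpha > 1 and a = 0: the bound vanishes. *)
    rewrite Rmult_0_l. unfold rpow at 1.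
    destruct Req_EM_T; [|lra]. destruct Req_EM_T; [lra|].
    unfold gamma_integrand.
    pose proof (rpow_nonneg t (alpha - 1)).
    pose proof (rpow_nonneg (0 + b - t) (alpha - 1)).
    pose proof (exp_pos (- t)). pose proof (exp_pos (- (0 + b - t))). nra. }
  assert (Hpos : 0 < a) by lra.
  assert (Hprod : ln a + ln b <= ln t + ln (a + b - t)).
  { rewrite <- !ln_mult by lra. apply ln_le; [nra|].
    now apply reflected_product_ge. }
  rewrite !gamma_integrand_pos, rpow_pos_base by nra.
  rewrite ln_mult by lra. rewrite <- exp_plus.
  eapply Rle_trans; [|apply exp_midpoint_le].
  apply Rmult_le_compat_l; [lra|].
  apply exp_le_mono.
  assert (0 <= (alpha - 1) * ((ln t + ln (a + b - t)) - (ln a + ln b)))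
    by (apply Rmult_le_pos; lra).
  lra.
Qed.

(* Integrals over [a,b] are invariant under the reflection t |-> a+b-t:
   it is the affine change of variables with slope -1 and swapped limits. *)
Lemma is_RInt_reflect {V : NormedModule R_AbsRing} (f : R -> V) (a b : R) (l : V) :
  is_RInt f a b l -> is_RInt (fun t => f (a + b - t)) a b l.
Proof.
  intros Hf.
  assert (Hswap : is_RInt f (-1 * a + (a + b)) (-1 * b + (a + b)) (opp l)).
  { replace (-1 * a + (a + b)) with b by ring.
    replace (-1 * b + (a + b)) with a by ring.
    now apply is_RInt_swap. }
  apply is_RInt_opp, is_RInt_comp_lin in Hswap.
  rewrite opp_opp in Hswap.
  apply (is_RInt_ext _ _ _ _ _) with (2 := Hswap); intros t _.
  change (-1) with (opp (@one R_Ring)) at 1.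
  rewrite scal_opp_one, opp_opp. f_equal; ring.
Qed.

Lemma is_RInt_ge_of_reflected_sum (f : R -> R) (a b c l : R) :
  a <= b -> is_RInt f a b l ->
  (forall t, a < t < b -> 2 * c <= f t + f (a + b - t)) ->
  (b - a) * c <= l.
Proof.
  intros Hab Hf Hpair.
  assert (Hsum : is_RInt (fun t => f t + f (a + b - t)) a b (l + l))
    by exact (is_RInt_plus _ _ _ _ _ _ Hf (is_RInt_reflect f a b l Hf)).
  pose proof (is_RInt_le _ _ _ _ _ _ Hab (is_RInt_const a b (2 * c)) Hsum Hpair)
    as Hle.
  change (scal (b - a) (2 * c)) with ((b - a) * (2 * c)) in Hle.
  lra.
Qed.

Lemma RiemannInt_difference (f : R -> R) (a b : R)
  (pra : Riemann_integrable f 0 a) (prb : Riemann_integrable f 0 b) :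
  is_RInt f a b (RiemannInt prb - RiemannInt pra).
Proof.
  assert (Hint : forall x (pr : Riemann_integrable f 0 x),
            is_RInt f 0 x (RiemannInt pr)).
  { intros x pr. rewrite <- (RInt_Reals f 0 x pr).
    apply (@RInt_correct R_CompleteNormedModule), (ex_RInt_Reals_1 _ _ _ pr). }
  replace (RiemannInt prb - RiemannInt pra)
    with (plus (opp (RiemannInt pra)) (RiemannInt prb)) by (cbn; ring).
  apply (@is_RInt_Chasles R_NormedModule) with 0.
  - apply (@is_RInt_swap R_NormedModule), Hint.
  - apply Hint.
Qed.

Lemma incomplete_gamma_gap_ordered (alpha a b : R)
  (halpha : 1 <= alpha) (ha : 0 <= a) (hab : a <= b)
  (pra : Riemann_integrable (gamma_integrand alpha) 0 a)
  (prb : Riemann_integrable (gamma_integrand alpha) 0 b) :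
  (b - a) * gamma_gap_bound alpha a b <= RiemannInt prb - RiemannInt pra.
Proof.
  apply (is_RInt_ge_of_reflected_sum (gamma_integrand alpha)) with (1 := hab).
  - apply RiemannInt_difference.
  - intros t Ht. apply gamma_integrand_reflected_sum; lra.
Qed.

Theorem mainTheorem14 (alpha a b : R)
  (halpha : 1 <= alpha) (ha : 0 <= a) (hb : 0 <= b)
  (pra : Riemann_integrable (gamma_integrand alpha) 0 a)
  (prb : Riemann_integrable (gamma_integrand alpha) 0 b) :
  Rabs (RiemannInt pra - RiemannInt prb)
    >= Rabs (a - b) * rpow (a * b) ((alpha - 1) / 2) * exp (- ((a + b) / 2)).
Proof.
  rewrite Rmult_assoc. fold (gamma_gap_bound alpha a b).
  apply Rle_ge.
  pose proof (gamma_gap_bound_nonneg alpha a b) as Hbound.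
  destruct (Rle_dec a b) as [hab | hba].
  - pose proof (incomplete_gamma_gap_ordered alpha a b halpha ha hab pra prb)
      as Hgap.
    rewrite (Rabs_minus_sym a), (Rabs_minus_sym (RiemannInt pra)), !Rabs_pos_eq
      by nra.
    exact Hgap.
  - rewrite gamma_gap_bound_sym in *.
    pose proof (incomplete_gamma_gap_ordered alpha b a halpha hb
                  ltac:(lra) prb pra) as Hgap.
    rewrite !Rabs_pos_eq by nra. exact Hgap.
Qed.
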